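(* Let $(X,d)$ be a compact metric space and $(X,f)$ a flow or semiflow that has the weak reparametrized gluing orbit property and is not minimal. Then there exist $z\in X$, $\epsilon>0$ and $\tau>0$ such that $d(f^t(z),z)\ge\epsilon$ for every $t\ge\tau$.
   Context: A flow (resp. semiflow) on $X$ is a continuous family $\{f^t\}$ of continuous maps $X\to X$ indexed by $t\in\mathbb{R}$ (resp. $t\in[0,\infty)$) with $f^0=\mathrm{id}$ and $f^{t+s}=f^t\circ f^s$. $(X,f)$ is minimal if for every $x\in X$ the forward orbit $\{f^t(x):t\ge 0\}$ is dense in $X$. For $L\ge 1$, an $L$-reparametrization is a strictly increasing continuous function $\gamma:[0,\infty)\to[0,\infty)$ with $\gamma(0)=0$ and $L^{-1}\le \frac{\gamma(t_1)-\gamma(t_2)}{t_1-t_2}\le L$ for all $t_1\ne t_2$ in $[0,\infty)$. An orbit sequence of rank $k$ is a finite sequence $\mathscr{C}=\{(x_j,m_j)\in X\times[0,\infty):j=1,\dots,k\}$. A gap for it is a $(k-1)$-tuple $\mathscr{g}=\{t_j\in[0,\infty):j=1,\dots,k-1\}$. Given a reparametrization $\gamma$ and $\epsilon>0$, $(\mathscr{C},\mathscr{g},\gamma)$ is $\epsilon$-shadowed by $z\in X$ if for every $j=1,\dots,k$ and every $t\in[0,m_j]$ one has $d(f^{\gamma(s_j+t)}(z),f^t(x_j))<\epsilon$, where $s_1=0$ and $s_j=\sum_{i=1}^{j-1}(m_i+t_i)$ for $j\ge2$. $(X,f)$ has the weak reparametrized gluing orbit property if for every $\epsilon>0$ there is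 $M=M(\epsilon)>0$ such that for every orbit sequence $\mathscr{C}$ there exist a gap $\mathscr{g}$ with $\max\mathscr{g}\le M$ and an $M$-reparametrization $\gamma$ such that $(\mathscr{C},\mathscr{g},\gamma)$ is $\epsilon$-shadowed by some point of $X$. *)

From Stdlib Require Import Reals Lra List.
Open Scope R_scope.

Definition is_metric {X : Type} (d : X -> X -> R) : Prop :=
  (forall x y, 0 <= d x y) /\
  (forall x y, d x y = 0 <-> x = y) /\
  (forall x y, d x y = d y x) /\
  (forall x y z, d x z <= d x y + d y z).

Definition open_set {X : Type} (d : X -> X -> R) (U : X -> Prop) : Prop :=
  forall x, U x -> exists r, 0 < r /\ forall y, d x y < r -> U y.

Definition compact_space {X : Type} (d : X -> X -> R) : Prop :=
  forall (I : Type) (U : I -> X -> Prop),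
    (forall i, open_set d (U i)) ->
    (forall x, exists i, U i x) ->
    exists l : list I, forall x, exists i, In i l /\ U i x.

(* f : R -> X -> X is a semiflow: only times t >= 0 are used.
   Joint continuity on [0,oo) x X, f^0 = id, f^(t+s) = f^t o f^s. *)
Definition is_semiflow {X : Type} (d : X -> X -> R) (f : R -> X -> X) : Prop :=
  (forall x, f 0 x = x) /\
  (forall t s x, 0 <= t -> 0 <= s -> f (t + s) x = f t (f s x)) /\
  (forall t x eps, 0 <= t -> 0 < eps ->
     exists delta, 0 < delta /\
       forall s y, 0 <= s -> Rabs (s - t) < delta -> d x y < delta ->
         d (f s y) (f t x) < eps).

Definition is_flow {X : Type} (d : X -> X -> R) (f : R -> X -> X) : Prop :=
  (forall x, f 0 x = x) /\
  (forall t s x, f (t + s) x = f t (f s x)) /\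
  (forall t x eps, 0 < eps ->
     exists delta, 0 < delta /\
       forall s y, Rabs (s - t) < delta -> d x y < delta ->
         d (f s y) (f t x) < eps).

Definition minimal {X : Type} (d : X -> X -> R) (f : R -> X -> X) : Prop :=
  forall x y eps, 0 < eps -> exists t, 0 <= t /\ d (f t x) y < eps.

Definition reparametrization (L : R) (gamma : R -> R) : Prop :=
  1 <= L /\
  gamma 0 = 0 /\
  (forall t, 0 <= t -> 0 <= gamma t) /\
  (forall t1 t2, 0 <= t1 -> t1 < t2 -> gamma t1 < gamma t2) /\
  (forall t0 eps, 0 <= t0 -> 0 < eps -> exists delta, 0 < delta /\
      forall t, 0 <= t -> Rabs (t - t0) < delta -> Rabs (gamma t - gamma t0) < eps) /\
  (forall t1 t2, 0 <= t1 -> 0 <= t2 -> t1 <> t2 ->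
     / L <= (gamma t1 - gamma t2) / (t1 - t2) <= L).

Fixpoint start_time (m g : nat -> R) (j : nat) : R :=
  match j with
  | O => 0
  | S j' => start_time m g j' + (m j' + g j')
  end.

(* orbit sequence {(x j, m j) : j < k}, gap {g j : j < k-1} *)
Definition shadowed {X : Type} (d : X -> X -> R) (f : R -> X -> X)
  (k : nat) (x : nat -> X) (m g : nat -> R) (gamma : R -> R) (eps : R) (z : X) : Prop :=
  forall j, (j < k)%nat -> forall t, 0 <= t <= m j ->
    d (f (gamma (start_time m g j + t)) z) (f t (x j)) < eps.

Definition weak_reparam_gluing {X : Type} (d : X -> X -> R) (f : R -> X -> X) : Prop :=
  forall eps, 0 < eps -> exists M, 0 < M /\
    forall (k : nat) (x : nat -> X) (m : nat -> R),
      (forall j, (j < k)%nat -> 0 <= m j) ->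
      exists (g : nat -> R) (gamma : R -> R) (z : X),
        (forall j, (S j < k)%nat -> 0 <= g j <= M) /\
        reparametrization M gamma /\
        shadowed d f k x m g gamma eps z.

(* Non-minimality gives points x, y and e > 0 such that the forward
   orbit of x stays e-away from y.  Gluing the orbit segment (y, 0) to a long
   segment of the orbit of x yields a point w that starts e/4-close to y, and,
   after a time bounded by the gap and the reparametrization constant, follows
   the orbit of x for as long as we like; during that time it stays e/2-away
   from w itself.  A cluster point z of such points w, with longer and longer
   escape windows, inherits the escape property for all large times by
   continuity of the time-t maps. *)
From Stdlib Require Import Reals Lra Lia ZArith List Classical IndefiniteDescription.
Open Scope R_scope.

Lemma exists_nat_ge (t : R) : exists n : nat, t <= INR n.
Proof.
  destruct (archimed t) as [t_lt_up _].
  destruct (Z_le_gt_dec 0 (up t)) as [up_nonneg | up_neg].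
  - exists (Z.to_nat (up t)). rewrite INR_IZR_INZ, Z2Nat.id by lia. lra.
  - exists 0%nat. assert (IZR (up t) < 0) by (apply IZR_lt; lia). simpl; lra.
Qed.

Lemma list_bounded_nat {A : Type} (h : A -> nat) (l : list A) :
  exists N, forall i, In i l -> (h i <= N)%nat.
Proof.
  induction l as [|a l [N HN]]; [exists 0%nat; intros i []|].
  exists (Nat.max (h a) N). intros i [<- | Hi]; [lia|]. specialize (HN i Hi). lia.
Qed.

Lemma not_minimal_avoiding_orbit {X : Type} (d : X -> X -> R) (f : R -> X -> X) :
  ~ minimal d f ->
  exists x y e, 0 < e /\ forall t, 0 <= t -> e <= d (f t x) y.
Proof.
  intros not_min. apply NNPP; intro no_avoid. apply not_min.
  intros x y e e_pos. apply NNPP; intro far.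
  apply no_avoid. exists x, y, e. split; [exact e_pos|].
  intros t t_nonneg. apply Rnot_lt_le. intro close. apply far. now exists t.
Qed.

Section Reparametrization.

Variables (L : R) (gamma : R -> R).
Hypothesis gamma_reparam : reparametrization L gamma.

Lemma reparametrization_le_mul t : 0 <= t -> gamma t <= L * t.
Proof.
  destruct gamma_reparam as (L_ge1 & gamma0 & _ & _ & _ & slope).
  intros t_nonneg. destruct (Req_dec t 0) as [-> | t_neq0]; [rewrite gamma0; lra|].
  destruct (slope t 0 t_nonneg (Rle_refl 0) t_neq0) as [_ slope_le].
  rewrite gamma0, !Rminus_0_r in slope_le.
  replace (gamma t) with (gamma t / t * t) by (field; exact t_neq0).
  apply Rmult_le_compat_r; lra.
Qed.

Lemma reparametrization_ge_div t : 0 <= t -> t / L <= gamma t.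
Proof.
  destruct gamma_reparam as (L_ge1 & gamma0 & _ & _ & _ & slope).
  intros t_nonneg. destruct (Req_dec t 0) as [-> | t_neq0]; [rewrite gamma0; lra|].
  destruct (slope t 0 t_nonneg (Rle_refl 0) t_neq0) as [div_le _].
  rewrite gamma0, !Rminus_0_r in div_le.
  replace (gamma t) with (gamma t / t * t) by (field; exact t_neq0).
  unfold Rdiv at 1. rewrite Rmult_comm. apply Rmult_le_compat_r; lra.
Qed.

Lemma reparametrization_onto a b s :
  0 <= a <= b -> gamma a <= s <= gamma b -> exists t, a <= t <= b /\ gamma t = s.
Proof.
  destruct gamma_reparam as (_ & _ & _ & _ & gamma_cont & _).
  intros ab s_between.
  (* [gamma] is only continuous on [0, oo); extend it by [gamma 0] to apply IVT. *)
  set (h := fun t => gamma (Rmax 0 t) - s).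
  assert (h_cont : continuity h).
  { intros t0. apply continuity_pt_minus; [|apply continuity_pt_const; now intros ? ?].
    intros eps eps_pos.
    destruct (gamma_cont (Rmax 0 t0) eps (Rmax_l 0 t0) eps_pos) as [delta [delta_pos Hdelta]].
    exists delta. split; [exact delta_pos|]. intros t [_ t_close].
    simpl in *; unfold R_dist in *. apply Hdelta; [apply Rmax_l|].
    unfold Rmax; destruct (Rle_dec 0 t), (Rle_dec 0 t0);
      unfold Rabs in *; repeat destruct Rcase_abs; lra. }
  destruct (IVT_cor h a b h_cont (proj2 ab)) as [t [t_in ht]].
  { unfold h. rewrite !Rmax_right by lra. nra. }
  unfold h in ht. rewrite Rmax_right in ht by lra. exists t. split; [exact t_in | lra].
Qed.

End Reparametrization.

Section Metric.

Variables (X : Type) (d : X -> X -> R).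
Hypothesis d_metric : is_metric d.

Lemma dist_refl x : d x x = 0.
Proof. destruct d_metric as (_ & dist_eq0 & _). now apply dist_eq0. Qed.

Lemma dist_sym x y : d x y = d y x.
Proof. destruct d_metric as (_ & _ & sym & _). apply sym. Qed.

Lemma dist_triangle x y z : d x z <= d x y + d y z.
Proof. destruct d_metric as (_ & _ & _ & tri). apply tri. Qed.

Lemma compact_cluster_point (w : nat -> X) :
  compact_space d ->
  exists z, forall delta N, 0 < delta -> exists n, (N <= n)%nat /\ d (w n) z < delta.
Proof.
  intros compact. apply NNPP; intro no_cluster.
  assert (isolated : forall p, exists delta N, 0 < delta /\
            forall n, (N <= n)%nat -> delta <= d (w n) p).
  { intros p. apply NNPP; intro not_isolated. apply no_cluster. exists p.
    intros delta N delta_pos. apply NNPP; intro far. apply not_isolated.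
    exists delta, N. split; [exact delta_pos|]. intros n Hn.
    apply Rnot_lt_le. intro close. apply far. now exists n. }
  (* Balls avoided by a tail of [w]; indexing them by (center, radius, tail start)
     avoids choosing a radius per center. *)
  set (U := fun '(p, delta, N) y =>
        (forall n, (N <= n)%nat -> delta <= d (w n) p) /\ d p y < delta).
  destruct (compact (X * R * nat)%type U) as [l covered].
  - intros [[p delta] N] y [avoid y_in]. exists (delta - d p y). split; [lra|].
    intros y' y'_close. split; [exact avoid|].
    pose proof (dist_triangle p y y'). lra.
  - intros x. destruct (isolated x) as [delta [N [delta_pos avoid]]].
    exists (x, delta, N). split; [exact avoid | now rewrite dist_refl].
  - destruct (list_bounded_nat snd l) as [Nmax HNmax].
    destruct (covered (w Nmax)) as [[[p delta] N] [i_in [avoid w_in]]].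
    specialize (avoid Nmax (HNmax _ i_in)). rewrite dist_sym in avoid. lra.
Qed.

End Metric.

Definition continuous_time_maps {X : Type} (d : X -> X -> R) (f : R -> X -> X) : Prop :=
  forall t x eps, 0 <= t -> 0 < eps ->
    exists delta, 0 < delta /\ forall y, d x y < delta -> d (f t y) (f t x) < eps.

Lemma flow_continuous_time_maps {X : Type} (d : X -> X -> R) (f : R -> X -> X) :
  is_flow d f -> continuous_time_maps d f.
Proof.
  intros (_ & _ & cont) t x eps _ eps_pos.
  destruct (cont t x eps eps_pos) as [delta [delta_pos Hdelta]].
  exists delta. split; [exact delta_pos|]. intros y y_close.
  apply Hdelta; [rewrite Rminus_diag, Rabs_R0|]; assumption.
Qed.

Lemma semiflow_continuous_time_maps {X : Type} (d : X -> X -> R) (f : R -> X -> X) :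
  is_semiflow d f -> continuous_time_maps d f.
Proof.
  intros (_ & _ & cont) t x eps t_nonneg eps_pos.
  destruct (cont t x eps t_nonneg eps_pos) as [delta [delta_pos Hdelta]].
  exists delta. split; [exact delta_pos|]. intros y y_close.
  apply Hdelta; [| rewrite Rminus_diag, Rabs_R0 |]; assumption.
Qed.

Section Escape.

Variables (X : Type) (d : X -> X -> R) (f : R -> X -> X).
Hypothesis d_metric : is_metric d.

Definition escapes_on (c A T : R) (w : X) : Prop :=
  forall s, A <= s <= T -> c <= d (f s w) w.

Lemma gluing_escapes_on (x y : X) (e : R) :
  (forall p, f 0 p = p) -> weak_reparam_gluing d f -> 0 < e ->
  (forall t, 0 <= t -> e <= d (f t x) y) ->
  exists A, 0 < A /\ forall T, exists w, escapes_on (e / 2) A T w.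
Proof.
  intros f0 gluing e_pos avoid.
  destruct (gluing (e / 4)) as [M [M_pos glue]]; [lra|].
  exists (M * M). split; [nra|]. intros T.
  set (m := M * Rabs T).
  assert (m_nonneg : 0 <= m) by (unfold m; pose proof (Rabs_pos T); nra).
  set (xs := fun j : nat => match j with 0%nat => y | _ => x end).
  set (ms := fun j : nat => match j with 0%nat => 0 | _ => m end).
  destruct (glue 2%nat xs ms) as (g & gamma & w & gap_le & reparam & shadow).
  { intros [|j] _; simpl; lra. }
  exists w. intros s s_in.
  destruct (gap_le 0%nat) as [g0_nonneg g0_le]; [lia|].
  set (g0 := g 0%nat) in *.
  assert (start_close : d w y < e / 4).
  { specialize (shadow 0%nat ltac:(lia) 0 ltac:(simpl; lra)).
    simpl in shadow. rewrite Rplus_0_r in shadow.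
    destruct reparam as (_ & gamma0 & _). now rewrite gamma0, !f0 in shadow. }
  assert (window_start : gamma g0 <= s).
  { pose proof (reparametrization_le_mul M gamma reparam g0 g0_nonneg). nra. }
  assert (window_end : s <= gamma (g0 + m)).
  { pose proof (reparametrization_ge_div M gamma reparam (g0 + m) ltac:(lra)).
    pose proof (Rle_abs T).
    assert ((g0 + m) / M = g0 / M + Rabs T) by (unfold m; field; lra).
    assert (0 <= g0 / M) by (unfold Rdiv; apply Rmult_le_pos; [lra | left; apply Rinv_0_lt_compat; lra]). lra. }
  destruct (reparametrization_onto M gamma reparam g0 (g0 + m) s ltac:(lra) ltac:(lra))
    as [t [t_in gamma_t]].
  assert (follows_x : d (f s w) (f (t - g0) x) < e / 4).
  { specialize (shadow 1%nat ltac:(lia) (t - g0) ltac:(simpl; lra)).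
    simpl in shadow. fold g0 in shadow.
    replace (0 + (0 + g0) + (t - g0)) with t in shadow by ring.
    now rewrite gamma_t in shadow. }
  pose proof (avoid (t - g0) ltac:(lra)).
  pose proof (dist_triangle X d d_metric (f (t - g0) x) (f s w) y).
  pose proof (dist_triangle X d d_metric (f s w) w y).
  rewrite (dist_sym X d d_metric (f (t - g0) x) (f s w)) in *. lra.
Qed.

Lemma escapes_on_cluster_point (w : nat -> X) (z : X) (c A : R) :
  continuous_time_maps d f -> 0 < c ->
  (forall n, escapes_on c A (INR n) (w n)) ->
  (forall delta N, 0 < delta -> exists n, (N <= n)%nat /\ d (w n) z < delta) ->
  forall t, A <= t -> 0 <= t -> c / 2 <= d (f t z) z.
Proof.
  intros time_cont c_pos escape cluster t A_le t_nonneg.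
  destruct (time_cont t z (c / 4) t_nonneg ltac:(lra)) as [delta [delta_pos Hdelta]].
  destruct (exists_nat_ge t) as [N HN].
  destruct (cluster (Rmin delta (c / 4)) N) as [n [Nn wn_close]].
  { now apply Rmin_pos; lra. }
  pose proof (Rmin_l delta (c / 4)). pose proof (Rmin_r delta (c / 4)).
  pose proof (le_INR _ _ Nn).
  specialize (escape n t ltac:(lra)).
  assert (d (f t (w n)) (f t z) < c / 4)
    by (apply Hdelta; rewrite dist_sym by assumption; lra).
  pose proof (dist_triangle X d d_metric (f t (w n)) (f t z) (w n)).
  pose proof (dist_triangle X d d_metric (f t z) z (w n)).
  rewrite (dist_sym X d d_metric z (w n)) in *. lra.
Qed.

End Escape.

Theorem lemma3p1 (X : Type) (d : X -> X -> R) (f : R -> X -> X) :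
  is_metric d -> compact_space d ->
  (is_flow d f \/ is_semiflow d f) ->
  weak_reparam_gluing d f ->
  ~ minimal d f ->
  exists (z : X) (eps tau : R), 0 < eps /\ 0 < tau /\
    forall t, tau <= t -> eps <= d (f t z) z.
Proof.
  intros d_metric compact flow gluing not_min.
  assert (f0 : forall x, f 0 x = x) by (destruct flow as [[f0 _] | [f0 _]]; exact f0).
  assert (time_cont : continuous_time_maps d f).
  { destruct flow as [flow | semiflow].
    - exact (flow_continuous_time_maps d f flow).
    - exact (semiflow_continuous_time_maps d f semiflow). }
  destruct (not_minimal_avoiding_orbit d f not_min) as (x & y & e & e_pos & avoid).
  destruct (gluing_escapes_on X d f d_metric x y e f0 gluing e_pos avoid)
    as [A [A_pos escape]].
  destruct (functional_choice _ (fun n : nat => escape (INR n))) as [w w_escape].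
  destruct (compact_cluster_point X d d_metric w compact) as [z cluster].
  exists z, (e / 4), A. split; [lra | split; [exact A_pos|]].
  intros t A_le.
  replace (e / 4) with (e / 2 / 2) by field.
  apply (escapes_on_cluster_point X d f d_metric w z (e / 2) A); try assumption; lra.
Qed.
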